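(* Let $r$ be an odd positive integer and $n=2^{\alpha}p_1^{\alpha_1}p_2^{\alpha_2}\cdots p_s^{\alpha_s}$, where $p_1,\ldots,p_s$ are distinct odd primes each greater than $r$, $\alpha,\alpha_1,\ldots,\alpha_s$ are positive integers, and $2^t p_1^{\gamma}+r$ is composite for all $t\in\{1,\ldots,\alpha\}$ and $\gamma\in\{1,\ldots,\alpha_1\}$. For each such $t,\gamma$ let $q_{t,\gamma}$ be a prime divisor of $2^tp_1^{\gamma}+r$, and let $M$ be the least common multiple of all the $q_{t,\gamma}$. If $p_i\equiv 1\pmod{M}$ for all $i\in\{2,\ldots,s\}$ and $p_1-r\nmid n$, then $n\in G_r$.
   Context: For a positive integer $r$, the $r$-th Schemmel totient function $S_r:\mathbb{N}\to\mathbb{N}_0$ is the multiplicative arithmetic function (so $S_r(1)=1$ and $S_r(ab)=S_r(a)S_r(b)$ for coprime $a,b$) defined on prime powers by $S_r(p^{\alpha})=0$ if $p\le r$ and $S_r(p^\alpha)=p^{\alpha-1}(p-r)$ if $p>r$, for all primes $p$ and positive integers $\alpha$. $G_r$ denotes the set of positive integers not in the range of $S_r$. *)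

From mathcomp Require Import all_boot.
Set Implicit Arguments. Unset Strict Implicit. Unset Printing Implicit Defensive.

(* Schemmel totient S_r, written out as the multiplicative function over the
   prime factorization: S_r(n) = prod_{p^a || n} (p <= r ? 0 : p^(a-1)(p-r)).
   For n = 1 the product is empty, so S_r(1) = 1. Only n >= 1 is meaningful. *)
Definition schemmel (r n : nat) : nat :=
  \prod_(f <- prime_decomp n)
     (if f.1 <= r then 0 else f.1 ^ f.2.-1 * (f.1 - r)).

Definition in_G (r n : nat) : Prop :=
  0 < n /\ ~ (exists m, 0 < m /\ schemmel r m = n).

Definition composite (x : nat) : bool := (1 < x) && ~~ prime x.

From mathcomp Require Import all_boot.

Set Implicit Arguments.
Unset Strict Implicit.
Unset Printing Implicit Defensive.

(* If S_r(m) = n, the prime p_1 | n divides a factor q^(b-1)(q - r) of S_r(m)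
   with q > r prime. Since p_1 - r does not divide n, q <> p_1, so p_1 divides
   d := q - r, which divides n. As q and r are odd, d = 2^t p_1^g P with
   1 <= t <= alpha, 1 <= g <= alpha_1 and P a product of the p_i, i >= 2, hence
   P = 1 (mod q_{t,g}). Then q = P 2^t p_1^g + r is divisible by q_{t,g}, which is
   smaller than the composite 2^t p_1^g + r <= q: q is not prime. *)

Lemma biglcmn_nat_sup (m a b i : nat) (F : nat -> nat) :
  a <= i < b -> m %| F i -> m %| \big[lcmn/1]_(a <= j < b) F j.
Proof.
move=> ab_i m_Fi; apply: dvdn_trans m_Fi _.
by rewrite (big_rem i) ?mem_index_iota //= dvdn_lcml.
Qed.

Lemma mod1_of_prime_divisors (P Q : nat) : 0 < P ->
  (forall l, prime l -> l %| P -> l = 1 %[mod Q]) -> P = 1 %[mod Q].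
Proof.
move=> P_gt0 P_mod1; rewrite (prod_prime_decomp P_gt0) big_seq.
elim/big_ind: _ => [//|x y x1 y1|[l e] /= /mem_prime_decomp[pl e_gt0 le_P]].
  by rewrite -modnMm x1 y1 modnMm.
rewrite -modnXm (P_mod1 l) // ?modnXm ?exp1n //.
exact: dvdn_trans (dvdn_exp e_gt0 (dvdnn l)) le_P.
Qed.

Lemma not_prime_mul_shift (c r P Q : nat) :
  prime Q -> Q %| c + r -> composite (c + r) -> 0 < P -> P = 1 %[mod Q] ->
  ~~ prime (P * c + r).
Proof.
move=> pQ Q_cr /andP[cr_gt1 cr_np] P_gt0 P1.
have Q_lt : Q < c + r.
  rewrite ltn_neqAle dvdn_leq 1?ltnW // andbT.
  by apply: contraNneq cr_np => <-.
have Q_Pcr : Q %| P * c + r.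
  by rewrite /dvdn -modnDml -modnMml P1 modnMml mul1n modnDml.
apply/negP => pPcr; move: Q_Pcr Q_lt; rewrite dvdn_prime2 // => /eqP->.
by rewrite ltnNge leq_add2r leq_pmull.
Qed.

Lemma prime_dvd_schemmel (r m l : nat) :
  prime l -> l %| schemmel r m -> 0 < schemmel r m ->
  exists q, [/\ prime q, r < q, q - r %| schemmel r m & (l == q) || (l %| q - r)].
Proof.
move=> pl l_S S_gt0.
move: (l_S); rewrite Euclid_dvd_prod // big_has => /hasP[[q b] qb_m /=].
have [pq _ _] := mem_prime_decomp qb_m.
have : (if q <= r then 0 else q ^ b.-1 * (q - r)) %| schemmel r m.
  by rewrite /schemmel (big_rem _ qb_m) /= dvdn_mulr.
case: leqP => [_|rq qb_S]; first by rewrite dvd0n => /eqP S0; rewrite S0 in S_gt0.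
rewrite Euclid_dvdM // Euclid_dvdX // dvdn_prime2 // => l_qr.
exists q; split=> //; first exact: dvdn_trans (dvdn_mull _ _) qb_S.
by case/orP: l_qr => [/andP[-> _]|->]; rewrite ?orbT.
Qed.

Lemma pfactor2_coprime p1 p2 d : prime p1 -> prime p2 -> p1 != p2 -> 0 < d ->
  exists2 P, coprime (p1 * p2) P & d = P * (p1 ^ logn p1 d * p2 ^ logn p2 d).
Proof.
move=> p1_pr p2_pr p12 d_gt0.
have [d1 p1_d1 d_eq] := pfactor_coprime p1_pr d_gt0.
have d1_gt0 : 0 < d1 by move: d_gt0; rewrite d_eq muln_gt0 => /andP[].
have [P p2_P d1_eq] := pfactor_coprime p2_pr d1_gt0.
have p2_p1k : coprime p2 (p1 ^ logn p1 d).
  by rewrite coprimeXr // prime_coprime // dvdn_prime2 // eq_sym.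
exists P.
  rewrite coprimeMl p2_P andbT.
  by apply: coprime_dvdr p1_d1; rewrite d1_eq dvdn_mulr.
have -> : logn p2 d = logn p2 d1 by rewrite {1}d_eq mulnC logn_Gauss.
by rewrite {1}d_eq {1}d1_eq mulnAC -mulnA.
Qed.

Section SchemmelGap.

Variables (r alpha s : nat) (p a : nat -> nat) (q : nat -> nat -> nat) (n : nat).
Hypotheses (r_odd : odd r) (s_gt0 : 0 < s).
Hypothesis p_prime : forall i, i < s -> prime (p i).
Hypothesis p_odd : forall i, i < s -> odd (p i).
Hypothesis p_inj : forall i j, i < s -> j < s -> p i = p j -> i = j.
Hypothesis n_def : n = 2 ^ alpha * \prod_(i < s) p i ^ a i.

Let p0_prime : prime (p 0) := p_prime s_gt0.

Lemma prime_dvd_n l : prime l -> l %| n -> l = 2 \/ exists2 i, i < s & l = p i.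
Proof.
move=> pl; rewrite n_def Euclid_dvdM // Euclid_dvdX // dvdn_prime2 //.
case/orP=> [/andP[/eqP-> _]|]; first by left.
rewrite Euclid_dvd_prod // big_has => /hasP[i _ /=].
rewrite Euclid_dvdX // dvdn_prime2 ?p_prime // => /andP[/eqP-> _].
by right; exists i.
Qed.

Lemma odd_prod_p : odd (\prod_(i < s) p i ^ a i).
Proof.
elim/big_ind: _ => [//|x y|i _]; first by rewrite oddM => -> ->.
by rewrite oddX p_odd ?orbT.
Qed.

Lemma n_gt0 : 0 < n.
Proof. by rewrite n_def muln_gt0 expn_gt0 (odd_gt0 odd_prod_p). Qed.

Lemma logn2_n : logn 2 n = alpha.
Proof.
rewrite n_def lognM ?expn_gt0 ?(odd_gt0 odd_prod_p) // pfactorK //.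
by rewrite logn_coprime ?addn0 // coprime2n odd_prod_p.
Qed.

Lemma logn_p0_n : logn (p 0) n = a 0.
Proof.
have p0_2 : coprime (p 0) (2 ^ alpha).
  by rewrite coprimeXr // coprime_sym coprime2n p_odd.
have p0_others : coprime (p 0) (\prod_(i < s | i != Ordinal s_gt0) p i ^ a i).
  rewrite prime_coprime // Euclid_dvd_prod // big_has_cond.
  apply/hasPn => i _; apply/negP => /andP[i_ne0].
  rewrite Euclid_dvdX // dvdn_prime2 ?p_prime // => /andP[/eqP p0_i _].
  by case/eqP: i_ne0; apply: val_inj; rewrite /= (p_inj (ltn_ord i) s_gt0).
rewrite n_def logn_Gauss // (bigD1 (Ordinal s_gt0)) //= mulnC logn_Gauss //.
exact: pfactorK.
Qed.

Let M := \big[lcmn/1]_(1 <= t < alpha.+1) \big[lcmn/1]_(1 <= g < (a 0).+1) q t g.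
Hypothesis p_mod_M : forall i, 1 <= i < s -> p i = 1 %[mod M].

Lemma q_dvd_M t g : 1 <= t <= alpha -> 1 <= g <= a 0 -> q t g %| M.
Proof.
move=> t_range g_range.
apply: (biglcmn_nat_sup (i := t)); first by rewrite ltnS.
by apply: (biglcmn_nat_sup (i := g)); rewrite ?ltnS.
Qed.

Lemma mod_M_of_dvd_n P : 0 < P -> P %| n -> coprime 2 P -> coprime (p 0) P ->
  P = 1 %[mod M].
Proof.
move=> P_gt0 P_n P_odd P_p0; apply: mod1_of_prime_divisors => // l pl l_P.
have [l2|[i i_s l_pi]] := prime_dvd_n pl (dvdn_trans l_P P_n).
  by move: P_odd; rewrite prime_coprime // -l2 l_P.
case: (posnP i) => [i0|i_gt0].
  by move: P_p0; rewrite prime_coprime // -i0 -l_pi l_P.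
by rewrite l_pi p_mod_M ?i_gt0.
Qed.

Lemma dvd_n_decomposition d : 0 < d -> d %| n -> 2 %| d -> p 0 %| d ->
  exists t g P, [/\ 1 <= t <= alpha, 1 <= g <= a 0, 0 < P, P = 1 %[mod M]
                  & d = P * (2 ^ t * p 0 ^ g)].
Proof.
move=> d_gt0 d_n d_even p0_d.
have two_ne_p0 : 2 != p 0 by apply: contraTneq (p_odd s_gt0) => <-.
have [P P_coprime d_eq] := pfactor2_coprime (isT : prime 2) p0_prime two_ne_p0 d_gt0.
have P_gt0 : 0 < P by move: d_gt0; rewrite d_eq muln_gt0 => /andP[].
exists (logn 2 d), (logn (p 0) d), P; split=> //.
- rewrite logn_gt0 mem_primes d_gt0 d_even -logn2_n.
  exact: dvdn_leq_log n_gt0 d_n.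
- rewrite logn_gt0 mem_primes p0_prime d_gt0 p0_d -logn_p0_n.
  exact: dvdn_leq_log n_gt0 d_n.
move: P_coprime; rewrite coprimeMl => /andP[P_odd P_p0].
by apply: mod_M_of_dvd_n => //; apply: dvdn_trans d_n; rewrite d_eq dvdn_mulr.
Qed.

Hypothesis shift_composite : forall t g, 1 <= t <= alpha -> 1 <= g <= a 0 ->
  composite (2 ^ t * p 0 ^ g + r).
Hypothesis q_spec : forall t g, 1 <= t <= alpha -> 1 <= g <= a 0 ->
  prime (q t g) /\ q t g %| 2 ^ t * p 0 ^ g + r.

Lemma sub_r_ndvd_n q0 : prime q0 -> r < q0 -> p 0 %| q0 - r -> ~~ (q0 - r %| n).
Proof.
move=> pq0 r_q0 p0_d; apply/negP => d_n.
have q0_odd : odd q0.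
  case: (even_prime pq0) => [q0_2|//]; move: r_odd r_q0 p0_d; rewrite q0_2.
  case: (r) => [|[|//]] // _ _; rewrite dvdn1 => /eqP p0_1.
  by move: p0_prime; rewrite p0_1.
have d_even : 2 %| q0 - r by rewrite dvdn2 (oddB (ltnW r_q0)) q0_odd r_odd.
have d_gt0 : 0 < q0 - r by rewrite subn_gt0.
have [t [g [P [t_range g_range P_gt0 P_mod_M d_eq]]]] :=
  dvd_n_decomposition d_gt0 d_n d_even p0_d.
have [pQ Q_shift] := q_spec t_range g_range.
have Q_M := q_dvd_M t_range g_range.
have P_mod_Q : P = 1 %[mod q t g] by rewrite -(modn_dvdm P Q_M) P_mod_M modn_dvdm.
have := not_prime_mul_shift pQ Q_shift (shift_composite t_range g_range) P_gt0 P_mod_Q.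
by rewrite -d_eq (subnK (ltnW r_q0)) pq0.
Qed.

Hypothesis a0_gt0 : 0 < a 0.

Lemma schemmel_neq_n m : ~~ (p 0 - r %| n) -> schemmel r m != n.
Proof.
move=> p0r_ndvd; apply/eqP => S_n.
have p0_n : p 0 %| n.
  rewrite n_def dvdn_mull // (bigD1 (Ordinal s_gt0)) //= dvdn_mulr //.
  exact: dvdn_exp a0_gt0 (dvdnn _).
have := prime_dvd_schemmel (r := r) (m := m) p0_prime; rewrite S_n.
case/(_ p0_n n_gt0) => q0 [pq0 r_q0 q0r_n /orP[/eqP p0_q0|p0_d]].
  by rewrite p0_q0 q0r_n in p0r_ndvd.
by rewrite (negPf (sub_r_ndvd_n pq0 r_q0 p0_d)) in q0r_n.
Qed.

End SchemmelGap.

Theorem theorem3p2 (r alpha s : nat) (p a : nat -> nat) (n : nat)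
  (q : nat -> nat -> nat) :
  odd r -> 0 < r ->
  0 < s ->
  0 < alpha ->
  (forall i, i < s -> [/\ prime (p i), odd (p i), r < p i & 0 < a i]) ->
  (forall i j, i < s -> j < s -> p i = p j -> i = j) ->
  n = 2 ^ alpha * \prod_(i < s) p i ^ a i ->
  (forall t g, 1 <= t <= alpha -> 1 <= g <= a 0 ->
     composite (2 ^ t * p 0 ^ g + r)) ->
  (forall t g, 1 <= t <= alpha -> 1 <= g <= a 0 ->
     prime (q t g) /\ q t g %| 2 ^ t * p 0 ^ g + r) ->
  (let M := \big[lcmn/1]_(1 <= t < alpha.+1) \big[lcmn/1]_(1 <= g < (a 0).+1) q t g in
   forall i, 1 <= i < s -> p i = 1 %[mod M]) ->
  ~~ (p 0 - r %| n) ->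
  in_G r n.
Proof.
move=> r_odd _ s_gt0 _ p_spec p_inj n_def shift_composite q_spec p_mod_M p0r_ndvd.
have p_prime i (i_s : i < s) : prime (p i) by case: (p_spec i i_s).
have p_odd i (i_s : i < s) : odd (p i) by case: (p_spec i i_s).
have [_ _ _ a0_gt0] := p_spec 0 s_gt0.
split; first exact: n_gt0 p_odd n_def.
move=> [m [_ /eqP]]; apply/negP.
exact: (schemmel_neq_n r_odd s_gt0 p_prime p_odd p_inj n_def p_mod_M
  shift_composite q_spec a0_gt0).
Qed.
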